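(* Let $\mathcal{A}$ be a prime Banach algebra with a nonzero idempotent $p$ (i.e. $p^2=p\neq0$) such that $\mathcal{A}p$ is finite dimensional. Then every derivation on $\mathcal{A}$ is continuous.
   Context: A derivation on $\mathcal{A}$ is a linear map $\delta:\mathcal{A}\to\mathcal{A}$ with $\delta(ab)=a\delta(b)+\delta(a)b$ for all $a,b\in\mathcal{A}$; it is not assumed continuous. *)

From HB Require Import structures.
From mathcomp Require Import all_boot all_order all_algebra.
From mathcomp Require Import complex.
From mathcomp Require Import all_classical all_reals all_analysis.
Set Implicit Arguments. Unset Strict Implicit. Unset Printing Implicit Defensive.
Import Order.TTheory GRing.Theory Num.Theory Num.Def ComplexField.
Import numFieldNormedType.Exports.
Local Open Scope ring_scope.

Definition banach_algebra_mul (R : realType) (V : completeNormedModType R[i])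
    (mul : V -> V -> V) : Prop :=
  [/\ (forall a b c : V, mul (mul a b) c = mul a (mul b c)),
      (forall (k : R[i]) (a b c : V), mul (k *: a + b) c = k *: mul a c + mul b c),
      (forall (k : R[i]) (a b c : V), mul a (k *: b + c) = k *: mul a b + mul a c)
    & (forall a b : V, `|mul a b| <= `|a| * `|b|)].

Definition prime_algebra (R : realType) (V : completeNormedModType R[i])
    (mul : V -> V -> V) : Prop :=
  forall a b : V, (forall x : V, mul (mul a x) b = 0) -> a = 0 \/ b = 0.

Definition derivation (R : realType) (V : completeNormedModType R[i])
    (mul : V -> V -> V) (d : V -> V) : Prop :=
  (forall (k : R[i]) (a b : V), d (k *: a + b) = k *: d a + d b) /\
  (forall a b : V, d (mul a b) = mul a (d b) + mul (d a) b).

Definition left_ideal_finite_dim (R : realType) (V : completeNormedModType R[i])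
    (mul : V -> V -> V) (p : V) : Prop :=
  exists s : seq V, forall a : V, exists c : 'I_(size s) -> R[i],
    mul a p = \sum_(i < size s) c i *: s`_i.

From HB Require Import structures.
From mathcomp Require Import all_boot all_order all_algebra.
From mathcomp Require Import complex.
From mathcomp Require Import all_classical all_reals all_analysis.
From mathcomp Require Import lra.
Import Order.TTheory GRing.Theory Num.Theory ComplexField.
Import numFieldNormedType.Exports.
Set Implicit Arguments. Unset Strict Implicit. Unset Printing Implicit Defensive.
Local Open Scope ring_scope.
Local Open Scope complex_scope.

(* Since p is idempotent, A p is spanned by finitely many elements t_1, ..., t_n
   of A p itself.  The linear map b |-> (b t_1, ..., b t_n) takes values in
   (A p)^n and is injective: b t_i = 0 for all i forces b A p = 0, hence b = 0
   by primeness.  So A is finite dimensional, and every linear map on a finite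
   dimensional normed space is continuous: by
   induction on a spanning family, every vector v has coordinates of size
   O(|v|), because the span of a family with such coordinates is closed (a
   Cauchy sequence of coordinates converges in R[i]). *)

Section LinearCombinations.
Variables (K : fieldType) (V : lmodType K).
Implicit Types (s : seq V) (c : nat -> K).

Definition lincomb s c : V := \sum_(i < size s) c i *: s`_i.

Definition in_span s v := exists c, v = lincomb s c.

Definition subspace (P : V -> Prop) :=
  P 0 /\ forall k u v, P u -> P v -> P (k *: u + v).

Definition fin_dim (P : V -> Prop) := exists s, forall v, P v -> in_span s v.

Lemma lincomb_nil c : lincomb [::] c = 0.
Proof. by rewrite /lincomb big_ord0. Qed.

Lemma lincomb_cons t s c :
  lincomb (t :: s) c = c 0%N *: t + lincomb s (fun i => c i.+1).
Proof. by rewrite /lincomb big_ord_recl. Qed.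

Lemma lincombP s k c1 c2 :
  lincomb s (fun i => k * c1 i + c2 i) = k *: lincomb s c1 + lincomb s c2.
Proof.
rewrite /lincomb scaler_sumr -big_split; apply: eq_bigr => i _.
by rewrite scalerDl scalerA.
Qed.

Lemma lincomb0 s : lincomb s (fun _ => 0) = 0.
Proof. by rewrite /lincomb big1 // => i _; rewrite scale0r. Qed.

Lemma lincombZ s k c : lincomb s (fun i => k * c i) = k *: lincomb s c.
Proof.
rewrite -[RHS]addr0 -(lincomb0 s) -lincombP; congr lincomb.
by apply/funext => i; rewrite addr0.
Qed.

Lemma lincombB s c1 c2 :
  lincomb s (fun i => c1 i - c2 i) = lincomb s c1 - lincomb s c2.
Proof.
rewrite addrC -scaleN1r -lincombP; congr lincomb; apply/funext => i.
by rewrite mulN1r addrC.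
Qed.

Lemma in_span0 s : in_span s 0.
Proof. by exists (fun _ => 0); rewrite lincomb0. Qed.

Lemma in_spanP s k u v : in_span s u -> in_span s v -> in_span s (k *: u + v).
Proof.
by move=> [c1 ->] [c2 ->]; exists (fun i => k * c1 i + c2 i); rewrite lincombP.
Qed.

Lemma in_span_sum_ord s (c : 'I_(size s) -> K) :
  in_span s (\sum_(i < size s) c i *: s`_i).
Proof.
exists (fun n => if insub n is Some i then c i else 0).
by apply: eq_bigr => i _; rewrite valK.
Qed.

End LinearCombinations.

Lemma linear_lincomb (K : fieldType) (V W : lmodType K) (f : {linear V -> W})
    (s : seq V) (c : nat -> K) :
  f (lincomb s c) = lincomb (map f s) c.
Proof.
rewrite /lincomb linear_sum size_map; apply: eq_bigr => i _.
by rewrite linearZ (nth_map 0).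
Qed.

Section FiniteDimension.
Variables (K : fieldType) (A W : lmodType K).

Lemma fin_dim_of_kernel (f : {linear A -> W}) (s : seq W) (P : A -> Prop) :
  subspace P -> (forall v, P v -> in_span s (f v)) ->
  fin_dim (fun v => P v /\ f v = 0) -> fin_dim P.
Proof.
elim: s P => [|t s IH] P sP Pf [e ker_e].
  exists e => v Pv; apply: ker_e; split=> //.
  by have [c ->] := Pf v Pv; rewrite lincomb_nil.
pose P' v := P v /\ in_span s (f v).
have [e' span_e'] : fin_dim P'.
  apply: IH => [|v []//|].
    split=> [|k u v [Pu fu] [Pv fv]]; rewrite /P' ?linear0 ?linearP.
      by split; [exact: sP.1 | exact: in_span0].
    by split; [exact: sP.2 | exact: in_spanP].
  exists e => v [[Pv _] fv0]; exact: ker_e.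
have [P'P | /existsNP[v0 /not_implyP[Pv0 fv0_out]]] :=
  EM (forall v, P v -> in_span s (f v)).
  by exists e' => v Pv; apply: span_e'; split=> //; exact: P'P.
have [c0 fv0] := Pf v0 Pv0; rewrite lincomb_cons in fv0.
have c00 : c0 0%N != 0.
  apply: contra_notN fv0_out => /eqP c00; exists (fun i => c0 i.+1).
  by rewrite fv0 c00 scale0r add0r.
exists (v0 :: e') => v Pv; have [c fv] := Pf v Pv; rewrite lincomb_cons in fv.
pose mu := c 0%N / c0 0%N.
have [c' v_eq] : in_span e' ((- mu) *: v0 + v).
  apply: span_e'; split; first exact: sP.2.
  exists (fun i => - mu * c0 i.+1 + c i.+1).
  rewrite linearP fv0 fv lincombP scalerDr scalerA addrACA -scalerDl.
  by rewrite /mu mulNr divfK // addNr scale0r add0r.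
exists (fun i => if i is j.+1 then c' j else mu).
by rewrite lincomb_cons /= -v_eq scaleNr addNKr.
Qed.

Lemma fin_dim_of_kernels (I : eqType) (F : I -> {linear A -> W}) (s : seq W)
    (l : seq I) (P : A -> Prop) :
  subspace P -> (forall x v, x \in l -> P v -> in_span s (F x v)) ->
  fin_dim (fun v => P v /\ forall x, x \in l -> F x v = 0) -> fin_dim P.
Proof.
elim: l P => [|x l IH] P sP PF [e ker_e].
  by exists e => v Pv; apply: ker_e.
apply: (@fin_dim_of_kernel (F x) s) => // [v|].
  by apply: PF; rewrite mem_head.
apply: IH => [|y v yl [Pv _]|].
- split=> [|k u v [Pu Fu] [Pv Fv]]; first by rewrite linear0; split; [exact: sP.1|].
  by rewrite linearP Fu Fv scaler0 addr0; split; [exact: sP.2|].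
- by apply: PF; rewrite // in_cons yl orbT.
- exists e => v [[Pv Fxv] Flv]; apply: ker_e; split=> // y.
  by rewrite in_cons => /predU1P[->|]; [|exact: Flv].
Qed.

End FiniteDimension.

Section PrimeAlgebra.
Variables (K : fieldType) (A : lmodType K) (mul : A -> A -> A).
Hypothesis mulA : forall a b c, mul (mul a b) c = mul a (mul b c).
Hypothesis mul_linear_l : forall x, linear (mul^~ x).
Hypothesis mul_linear_r : forall a, linear (mul a).

Definition lmul (a : A) : {linear A -> A} :=
  HB.pack (mul a) (GRing.isLinear.Build K A A *:%R (mul a) (mul_linear_r a)).

Definition rmul (x : A) : {linear A -> A} :=
  HB.pack (mul^~ x) (GRing.isLinear.Build K A A *:%R (mul^~ x) (mul_linear_l x)).

Lemma fin_dim_of_left_ideal (p : A) (s : seq A) :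
  mul p p = p -> (forall b, (forall x, mul (mul b x) p = 0) -> b = 0) ->
  (forall a, in_span s (mul a p)) -> fin_dim (fun _ : A => True).
Proof.
move=> pp p_faithful span_s.
pose t := map (rmul p) s.
have span_t a : in_span t (mul a p).
  by have [c sc] := span_s a; exists c; rewrite -pp -mulA sc -linear_lincomb.
apply: (@fin_dim_of_kernels _ _ _ _ rmul t t) => [|x v /mapP[y _ ->] _|].
- by split.
- by rewrite /= -mulA; exact: span_t.
- exists [::] => v [_ vt0]; suff -> : v = 0 by exact: in_span0.
  apply: p_faithful => x; have [c xp] := span_t x.
  rewrite mulA xp -[mul v _]/(lmul v _) linear_lincomb.
  rewrite /lincomb big1 // => -[i /=]; rewrite size_map => i_lt _.
  by rewrite (nth_map 0) //= [mul v _](vt0 _ (mem_nth 0 i_lt)) scaler0.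
Qed.

End PrimeAlgebra.

Lemma telescoping_limit (R : realType) (x T : nat -> R) :
  (forall k, 0 <= T k) -> (forall k, `|x k.+1 - x k| <= T k - T k.+1) ->
  exists L, forall k, `|L - x k| <= T k.
Proof.
move=> T0 dx.
pose y k := x k - T k; pose z k := x k + T k.
have y_incr : nondecreasing_seq y.
  by apply/nondecreasing_seqP => k; have := dx k; rewrite ler_norml /y; lra.
have z_decr : nonincreasing_seq z.
  by apply/nonincreasing_seqP => k; have := dx k; rewrite ler_norml /z; lra.
have y_le_z m k : y m <= z k.
  have [mk|km] := leqP m k.
    by apply: le_trans (y_incr _ _ mk) _; have := T0 k; rewrite /y /z; lra.
  by apply: le_trans (z_decr _ _ (ltnW km)); have := T0 m; rewrite /y /z; lra.
have y_bounded : has_sup (range y).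
  by split; [exists (y 0%N), 0%N | exists (z 0%N) => _ [m _ <-]; exact: y_le_z].
exists (sup (range y)) => k.
have yk_le : y k <= sup (range y) by apply: sup_upper_bound => //; exists k.
have le_zk : sup (range y) <= z k.
  by apply: ge_sup; [exists (y 0%N), 0%N | move=> _ [m _ <-]; exact: y_le_z].
by rewrite ler_norml; move: yk_le le_zk; rewrite /y /z; lra.
Qed.

Lemma le_exp2V_eq0 (R : realType) (x B : R) :
  0 <= x -> (forall k, x <= 2 ^- k * B) -> x = 0.
Proof.
move=> x0 x_le; apply/eqP; rewrite eq_le x0 andbT leNgt; apply/negP => x_gt0.
have xk_le k : x * k%:R <= B.
  have := x_le k; rewrite mulrC ler_pdivlMr ?exprn_gt0 // => /(le_trans _); apply.
  rewrite ler_pM2l // -natrX ler_nat; exact/ltnW/ltn_expl.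
have B0 : 0 <= B by apply: le_trans (xk_le 0%N); rewrite mulr0.
have := archi_boundP (divr_ge0 B0 (ltW x_gt0)); rewrite ltr_pdivrMr // mulrC.
by have := xk_le (Num.bound (B / x)); lra.
Qed.

Section ComplexNorm.
Variable R : realType.
Local Notation K := R[i].

(* Norms of a normed R[i]-space are elements of R[i]; [rnorm] reads them in R,
   where suprema and [lra] are available. *)
Definition rnorm {W : normedZmodType K} (v : W) : R := complex.Re `|v|.

Lemma normE {W : normedZmodType K} (v : W) : `|v| = (rnorm v)%:C.
Proof.
have : 0 <= `|v| by [].
by rewrite /rnorm; case: `|v| => a b; rewrite lecE /= => /andP[/eqP-> _].
Qed.

Lemma rnorm_ge0 {W : normedZmodType K} (v : W) : 0 <= rnorm v.
Proof. by rewrite -ler0c -normE. Qed.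

Lemma rnorm0 {W : normedZmodType K} : rnorm (0 : W) = 0.
Proof. by rewrite /rnorm normr0. Qed.

Lemma rnorm_eq0 {W : normedZmodType K} (v : W) : rnorm v = 0 -> v = 0.
Proof. by move=> v0; apply/normr0_eq0; rewrite normE v0. Qed.

Lemma rnormN {W : normedZmodType K} (v : W) : rnorm (- v) = rnorm v.
Proof. by rewrite /rnorm normrN. Qed.

Lemma rnormB {W : normedZmodType K} (u v : W) : rnorm (u - v) = rnorm (v - u).
Proof. by rewrite /rnorm distrC. Qed.

Lemma rnormD {W : normedZmodType K} (u v : W) :
  rnorm (u + v) <= rnorm u + rnorm v.
Proof. by rewrite -lecR rmorphD /= -!normE ler_normD. Qed.

Lemma rnormZ {W : normedModType K} (k : K) (v : W) :
  rnorm (k *: v) = rnorm k * rnorm v.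
Proof. by apply: complexI; rewrite rmorphM /= -!normE normrZ. Qed.

Lemma rnorm_lincomb {W : normedModType K} (s : seq W) (c : nat -> K) :
  rnorm (lincomb s c) <= \sum_(i < size s) rnorm (c i) * rnorm s`_i.
Proof.
rewrite -lecR -normE raddf_sum; apply: le_trans (ler_norm_sum _ _ _) _.
by apply: ler_sum => i _; rewrite normrZ !normE -rmorphM.
Qed.

Lemma rnorm_Re (z : K) : `|complex.Re z| <= rnorm z.
Proof.
case: z => a b; rewrite /rnorm normc_def /= -[`|a|]sqrtr_sqr.
by rewrite ler_sqrt ?addr_ge0 ?sqr_ge0 // lerDl sqr_ge0.
Qed.

Lemma rnorm_Im (z : K) : `|complex.Im z| <= rnorm z.
Proof.
case: z => a b; rewrite /rnorm normc_def /= -[`|b|]sqrtr_sqr.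
by rewrite ler_sqrt ?addr_ge0 ?sqr_ge0 // lerDr sqr_ge0.
Qed.

Lemma rnorm_le_ReIm (z : K) : rnorm z <= `|complex.Re z| + `|complex.Im z|.
Proof.
case: z => a b; rewrite /rnorm normc_def /=.
rewrite -[leRHS]ger0_norm ?addr_ge0 // -sqrtr_sqr ler_sqrt ?sqr_ge0 //.
rewrite sqrrD !real_normK ?num_real // -addrA lerD2l lerDr.
by rewrite mulrn_wge0 // mulr_ge0.
Qed.

Lemma complex_telescoping_limit (z : nat -> K) (T : nat -> R) :
  (forall k, 0 <= T k) -> (forall k, rnorm (z k.+1 - z k) <= T k - T k.+1) ->
  exists L, forall k, rnorm (L - z k) <= 2 * T k.
Proof.
move=> T0 dz.
have [a Re_lim] : exists a, forall k, `|a - complex.Re (z k)| <= T k.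
  apply: telescoping_limit => // k; rewrite -raddfB.
  exact: le_trans (rnorm_Re _) (dz k).
have [b Im_lim] : exists b, forall k, `|b - complex.Im (z k)| <= T k.
  apply: telescoping_limit => // k; rewrite -raddfB.
  exact: le_trans (rnorm_Im _) (dz k).
exists (Complex a b) => k; apply: le_trans (rnorm_le_ReIm _) _.
by rewrite !raddfB /=; have := Re_lim k; have := Im_lim k; lra.
Qed.

End ComplexNorm.

Section CoordinateBound.
Variables (R : realType) (V : normedModType R[i]).
Local Notation K := R[i].

Definition coord_bounded (s : seq V) (M : R) := forall v, in_span s v ->
  exists c, v = lincomb s c /\ forall i, rnorm (c i) <= M * rnorm v.

Lemma approx_coords_cauchy (s : seq V) (t : V) (M : R) :
  0 <= M -> coord_bounded s M ->
  (forall e, 0 < e -> exists c, rnorm (t - lincomb s c) < e) ->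
  exists C : nat -> nat -> K, (forall k, rnorm (t - lincomb s (C k)) < 2 ^- k) /\
    forall k i, rnorm (C k.+1 i - C k i) <= 2 * M * 2 ^- k.
Proof.
move=> M0 sM t_approx.
have e_gt0 k : 0 < 2 ^- k :> R by rewrite invr_gt0 exprn_gt0.
have eS k : 2 ^- k.+1 = 2 ^- k / 2 :> R by rewrite exprS invfM mulrC.
have [a a_approx] := choice (fun k => t_approx _ (e_gt0 k)).
have d_ex k : exists dk : nat -> K,
    lincomb s dk = lincomb s (a k.+1) - lincomb s (a k) /\
    forall i, rnorm (dk i) <= 2 * M * 2 ^- k.
  have [|d [d_eq d_le]] := sM (lincomb s (a k.+1) - lincomb s (a k)).
    by rewrite -lincombB; exists (fun i => a k.+1 i - a k i).
  exists d; split=> [|i]; first by rewrite d_eq.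
  apply: le_trans (d_le i) _; rewrite [2 * M]mulrC -mulrA ler_wpM2l //.
  have -> : lincomb s (a k.+1) - lincomb s (a k) =
      (t - lincomb s (a k)) - (t - lincomb s (a k.+1)).
    by rewrite opprB [RHS]addrC addrA subrK.
  apply: le_trans (rnormD _ _) _; rewrite rnormN.
  by have := a_approx k; have := a_approx k.+1; have := e_gt0 k; rewrite eS; lra.
have [d d_spec] := choice d_ex.
exists (fun k i => a 0%N i + \sum_(j < k) d j i); split => [k|k i].
  suff -> : lincomb s (fun i => a 0%N i + \sum_(j < k) d j i) = lincomb s (a k).
    exact: a_approx.
  elim: k => [|k IH].
    by congr lincomb; apply/funext => i; rewrite big_ord0 addr0.
  transitivity (lincomb s (fun i => 1 * (a 0%N i + \sum_(j < k) d j i) + d k i)).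
    by congr lincomb; apply/funext => i; rewrite big_ord_recr /= mul1r addrA.
  by rewrite lincombP scale1r IH (d_spec k).1 addrC subrK.
by rewrite big_ord_recr /= addrA [_ - _]addrC addKr; exact: (d_spec k).2.
Qed.

Lemma in_span_closed (s : seq V) (t : V) (M : R) :
  0 <= M -> coord_bounded s M ->
  (forall e, 0 < e -> exists c, rnorm (t - lincomb s c) < e) -> in_span s t.
Proof.
move=> M0 sM t_approx.
have [C [C_approx C_cauchy]] := approx_coords_cauchy M0 sM t_approx.
pose T k : R := 4 * M * 2 ^- k.
have T0 k : 0 <= T k by rewrite /T !mulr_ge0 // invr_ge0 exprn_ge0.
have C_lim_ex i : exists Ci, forall k, rnorm (Ci - C k i) <= 2 * T k.
  apply: complex_telescoping_limit => // k.
  by rewrite /T exprS invfM; apply: le_trans (C_cauchy k i) _; lra.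
have [Cl C_lim] := choice C_lim_ex.
exists Cl; apply/eqP; rewrite -subr_eq0; apply/eqP/rnorm_eq0.
pose S := \sum_(i < size s) rnorm s`_i.
apply: (@le_exp2V_eq0 _ _ (1 + 8 * M * S)) => [|k]; first exact: rnorm_ge0.
rewrite -[t](subrK (lincomb s (C k))) -addrA -lincombB.
apply: le_trans (rnormD _ _) _.
have : rnorm (lincomb s (fun i => C k i - Cl i)) <= 2 * T k * S.
  apply: le_trans (rnorm_lincomb _ _) _; rewrite /S mulr_sumr.
  by apply: ler_sum => i _; rewrite ler_wpM2r ?rnorm_ge0 // rnormB.
by have := C_approx k; rewrite /T; lra.
Qed.

Lemma coord_bounded_cons_span (t : V) (s : seq V) (M : R) :
  0 <= M -> coord_bounded s M -> in_span s t -> coord_bounded (t :: s) M.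
Proof.
move=> M0 sM [c0 ->] _ [c ->]; rewrite lincomb_cons.
have [|c' [v_eq c'_le]] := sM (c 0%N *: lincomb s c0 + lincomb s (fun i => c i.+1)).
  by rewrite -lincombP; eexists.
exists (fun i => if i is j.+1 then c' j else 0); split.
  by rewrite lincomb_cons scale0r add0r.
by case=> [|j] //=; rewrite rnorm0 mulr_ge0 ?rnorm_ge0.
Qed.

Lemma coord_bounded_cons_far (t : V) (s : seq V) (M e : R) :
  0 <= M -> 0 < e -> coord_bounded s M ->
  (forall c, e <= rnorm (t - lincomb s c)) ->
  coord_bounded (t :: s) (e^-1 + M * (1 + rnorm t / e)).
Proof.
move=> M0 e0 sM t_far _ [c ->]; rewrite lincomb_cons.
set lam := c 0%N; set u := lincomb s _; set v := lam *: t + u.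
have lam_le : rnorm lam <= e^-1 * rnorm v.
  rewrite mulrC ler_pdivlMr //.
  have [->|lam0] := eqVneq lam 0; first by rewrite rnorm0 mul0r rnorm_ge0.
  have -> : v = lam *: (t - lincomb s (fun i => - lam^-1 * c i.+1)).
    by rewrite lincombZ scaleNr opprK scalerDr scalerA mulfV // scale1r.
  by rewrite rnormZ ler_wpM2l ?rnorm_ge0.
have u_le : rnorm u <= rnorm v + rnorm lam * rnorm t.
  have -> : u = v - lam *: t by rewrite /v addrAC subrr add0r.
  by apply: le_trans (rnormD _ _) _; rewrite rnormN rnormZ.
have [c' [u_eq c'_le]] := sM u (ex_intro _ _ erefl).
exists (fun i => if i is j.+1 then c' j else lam); split.
  by rewrite lincomb_cons /= -u_eq.
have scale_ge0 : 0 <= M * (1 + rnorm t / e).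
  by rewrite mulr_ge0 // addr_ge0 // divr_ge0 ?rnorm_ge0 // ltW.
case=> [|j] /=.
  by apply: le_trans lam_le _; rewrite ler_wpM2r ?rnorm_ge0 // lerDl.
apply: le_trans (c'_le j) _.
apply: (@le_trans _ _ (M * (1 + rnorm t / e) * rnorm v)).
  rewrite -mulrA ler_wpM2l // mulrDl mul1r; apply: le_trans u_le _; rewrite lerD2l.
  by rewrite [leLHS]mulrC -mulrA ler_wpM2l ?rnorm_ge0.
by rewrite ler_wpM2r ?rnorm_ge0 // lerDr invr_ge0 ltW.
Qed.

Lemma exists_coord_bound (s : seq V) : exists2 M, 0 <= M & coord_bounded s M.
Proof.
elim: s => [|t s [M M0 sM]].
  exists 0 => // _ [c ->]; exists (fun _ => 0).
  by rewrite !lincomb_nil; split=> // i; rewrite rnorm0 mul0r.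
have [[e e0 t_far] | t_near] :=
  EM (exists2 e, 0 < e & forall c, e <= rnorm (t - lincomb s c)).
  exists (e^-1 + M * (1 + rnorm t / e)); last exact: coord_bounded_cons_far.
  apply: addr_ge0; first by rewrite invr_ge0 ltW.
  by rewrite mulr_ge0 // addr_ge0 // divr_ge0 ?rnorm_ge0 // ltW.
exists M => //; apply: coord_bounded_cons_span => //.
apply: (in_span_closed M0 sM) => e e0; apply: contrapT => no_c.
apply: t_near; exists e => // c; rewrite leNgt; apply/negP => lt_e.
by apply: no_c; exists c.
Qed.

End CoordinateBound.

Lemma fin_dim_linear_continuous (R : realType) (V W : normedModType R[i])
    (f : {linear V -> W}) :
  fin_dim (fun _ : V => True) -> continuous f.
Proof.
move=> [s span_s]; have [M M0 sM] := exists_coord_bound s.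
pose L := M * \sum_(i < size s) rnorm (f s`_i).
have f_le v : rnorm (f v) <= L * rnorm v.
  have [c [-> c_le]] := sM v (span_s v I).
  rewrite linear_lincomb; apply: le_trans (rnorm_lincomb _ _) _.
  rewrite /L mulrAC mulr_sumr size_map; apply: ler_sum => i _.
  by rewrite (nth_map 0) // ler_wpM2r ?rnorm_ge0.
apply: bounded_linear_continuous; apply/linear_boundedP.
have L0 : 0 <= L by rewrite mulr_ge0 // sumr_ge0 // => i _; exact: rnorm_ge0.
near=> r => x; rewrite !normE; apply: (@le_trans _ _ (L * rnorm x)%:C).
  by rewrite lecR f_le.
rewrite rmorphM ler_wpM2r ?ler0c ?rnorm_ge0 //.
by near: r; apply: nbhs_pinfty_ge; rewrite realE ler0c L0.
Unshelve. all: by end_near.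
Qed.

Theorem proposition2p9 (R : realType) (V : completeNormedModType R[i])
    (mul : V -> V -> V) (p : V) :
  banach_algebra_mul mul -> prime_algebra mul ->
  mul p p = p -> p != 0 -> left_ideal_finite_dim mul p ->
  forall d : V -> V, derivation mul d -> continuous d.
Proof.
move=> [mulA mulDl mulDr _] prime pp p0 [s span_s] d [d_linear _].
pose df : {linear V -> V} := HB.pack d (GRing.isLinear.Build _ _ _ _ d d_linear).
apply: (@fin_dim_linear_continuous _ _ _ df).
apply: (fin_dim_of_left_ideal mulA (fun x k a b => mulDl k a b x)
  (fun a k b c => mulDr k a b c) pp).
- by move=> b /prime[//|p_eq0]; rewrite p_eq0 eqxx in p0.
- by move=> a; have [c ->] := span_s a; exact: in_span_sum_ord.
Qed.
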